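(* Let $m>1$ and $n_1,\ldots,n_m>1$. Then the cone $\mathscr{P}_{\mathbb{C}}^{[n_1,\ldots,n_m]}$ is proper, while the cone $\mathscr{P}_{\mathbb{R}}^{[n_1,\ldots,n_m]}$ is solid but not pointed.
   Context: $\mathbb{C}^{[n_1,\ldots,n_m]}$ is the real vector space of tensors $\mathcal{H}\in\mathbb{C}^{n_1\times\cdots\times n_m\times n_1\times\cdots\times n_m}$ with $\mathcal{H}_{i_1\ldots i_m j_1\ldots j_m}=\overline{\mathcal{H}_{j_1\ldots j_m i_1\ldots i_m}}$; $\mathbb{R}^{[n_1,\ldots,n_m]}$ is its subset of real tensors. For $\mathbb{F}\in\{\mathbb{R},\mathbb{C}\}$, $\mathscr{P}_{\mathbb{F}}^{[n_1,\ldots,n_m]}:=\{\mathcal{H}\in\mathbb{F}^{[n_1,\ldots,n_m]}:\langle\mathcal{H},x_1\otimes\cdots\otimes x_m\otimes\overline{x_1}\otimes\cdots\otimes\overline{x_m}\rangle\ge0\ \forall x_i\in\mathbb{F}^{n_i}\}$, where $\langle\mathcal{A},\mathcal{B}\rangle=\sum\mathcal{A}_{\cdot}\overline{\mathcal{B}_{\cdot}}$. A closed convex cone in the real vector space $\mathbb{F}^{[n_1,\ldots,n_m]}$ is solid if it has nonempty interior, pointed if it contains no line through the origin, and proper if it is both. *)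

From HB Require Import structures.
From mathcomp Require Import all_boot all_order all_algebra.
From mathcomp Require Import complex.
From mathcomp Require Import reals.
Set Implicit Arguments. Unset Strict Implicit. Unset Printing Implicit Defensive.
Import Order.TTheory GRing.Theory Num.Theory.
Local Open Scope ring_scope.
Local Open Scope complex_scope.

Section Defs.
Variable R : realType.
Variable m : nat.
Variable n : 'I_m -> nat.

Definition mindex := {dffun forall k : 'I_m, 'I_(n k)}.

(* tensors in C^{n_1 x ... x n_m x n_1 x ... x n_m}, entry H_{i_1..i_m j_1..j_m}
   is  H i j  with i, j multi-indices *)
Definition tensor := mindex -> mindex -> R[i].

Definition vecs := forall k : 'I_m, 'I_(n k) -> R[i].

Definition is_realc (z : R[i]) : Prop := z^* = z.

(* membership in F^{[n_1..n_m]}; realF = true means F = R *)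
Definition herm_space (realF : bool) (H : tensor) : Prop :=
  (forall i j, H i j = (H j i)^*) /\
  (realF -> forall i j, is_realc (H i j)).

Definition admissible (realF : bool) (x : vecs) : Prop :=
  realF -> forall k l, is_realc (x k l).

(* <H, x_1 (x) ... (x) x_m (x) conj x_1 (x) ... (x) conj x_m>
   with <A,B> = sum A * conj B *)
Definition pairing (H : tensor) (x : vecs) : R[i] :=
  \sum_(i : mindex) \sum_(j : mindex)
    H i j * (\prod_(k < m) (x k (i k))^*) * (\prod_(k < m) x k (j k)).

Definition Pcone (realF : bool) (H : tensor) : Prop :=
  herm_space realF H /\
  forall x : vecs, admissible realF x -> 0 <= pairing H x.

(* sup-norm distance between tensors is < e  (any norm on the finite
   dimensional real vector space F^{[n]} induces the same topology) *)
Definition near_t (H H' : tensor) (e : R) : Prop :=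
  forall i j, `|H i j - H' i j| < e%:C.

Definition tscale (t : R) (H : tensor) : tensor := fun i j => t%:C * H i j.
Definition tadd (H H' : tensor) : tensor := fun i j => H i j + H' i j.
Definition tzero : tensor := fun _ _ => 0.

Definition convex_cone (realF : bool) (K : tensor -> Prop) : Prop :=
  (forall H, K H -> herm_space realF H) /\
  (forall H H' (a b : R), K H -> K H' -> 0 <= a -> 0 <= b ->
      K (tadd (tscale a H) (tscale b H'))).

Definition closed_in (realF : bool) (K : tensor -> Prop) : Prop :=
  forall H, herm_space realF H -> ~ K H ->
    exists2 e : R, 0 < e & forall H', herm_space realF H' -> near_t H' H e -> ~ K H'.

Definition solid (realF : bool) (K : tensor -> Prop) : Prop :=
  exists H, K H /\
    exists2 e : R, 0 < e & forall H', herm_space realF H' -> near_t H' H e -> K H'.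

Definition pointed (K : tensor -> Prop) : Prop :=
  ~ (exists D : tensor, D <> tzero /\ forall t : R, K (tscale t D)).

Definition closed_convex_cone (realF : bool) (K : tensor -> Prop) : Prop :=
  convex_cone realF K /\ closed_in realF K.

Definition proper_cone (realF : bool) (K : tensor -> Prop) : Prop :=
  closed_convex_cone realF K /\ solid realF K /\ pointed K.

End Defs.

(* The cone is an intersection of closed half-spaces { H | <H, x (x) conj x> >= 0 }, one
   per tuple x of vectors, hence closed and convex; the identity tensor is interior because
   its pairing with x is sum_i |x_i|^2, which dominates the pairing of any small perturbation.
   Over C the cone is pointed: if H and -H both lie in it, the form
   F(u, v) = sum_ij H_ij conj(u_i) v_j vanishes on the diagonal, and complex polarization,
   applied one mode at a time, shows that F vanishes identically, so H = 0. Over R there is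
   no polarization: for p = (0,...,0), q = (1,...,1) and r, s obtained from p, q by
   exchanging their first coordinates, every real product vector satisfies x_p x_q = x_r x_s,
   so the symmetric tensor E_pq + E_qp - E_rs - E_sr, nonzero since m > 1, spans a line
   inside the cone. *)

From HB Require Import structures.
From mathcomp Require Import all_boot all_order all_algebra.
From mathcomp Require Import complex reals ring.
From Stdlib Require Import Classical FunctionalExtensionality.
Set Implicit Arguments. Unset Strict Implicit. Unset Printing Implicit Defensive.
Import Order.TTheory GRing.Theory Num.Theory.
Local Open Scope ring_scope.

Lemma nneg_compl_open (C : numFieldType) (p : C) : ~ 0 <= p ->
  exists2 d : C, 0 < d & forall q, `|q - p| < d -> ~ 0 <= q.
Proof.
move=> p_nneg; have normp_neq : `|p| - p != 0.
  by apply/eqP => /subr0_eq pE; apply: p_nneg; rewrite -pE.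
exists (`| `|p| - p| / 2); first by rewrite divr_gt0 ?normr_gt0.
move=> q; rewrite ltr_pdivlMr // mulr_natr => qp_lt q_ge0.
suff : `| `|p| - p| <= `|q - p| *+ 2 by move=> /(lt_le_trans qp_lt); rewrite ltxx.
have -> : `|p| - p = (`|p| - `|q|) + (q - p) by rewrite (ger0_norm q_ge0) addrA subrK.
rewrite mulr2n; apply: le_trans (ler_normD _ _) _; rewrite lerD2r distrC.
exact: ler_dist_dist.
Qed.

Lemma real_ge0_dist (C : numDomainType) (z s : C) :
  z \is Num.real -> `|z - s| <= s -> 0 <= z.
Proof.
move=> z_real zs_le.
have s_real : s \is Num.real := ger0_real (le_trans (normr_ge0 _) zs_le).
rewrite -(gerBl s); apply: le_trans zs_le.
by rewrite distrC real_ler_norm ?rpredB.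
Qed.

Section Sesquilinear.
Variables (C : numClosedFieldType) (I : finType).
Implicit Types (A : I -> I -> C) (a b : I -> C).

Definition sesq A a b := \sum_i \sum_j A i j * (a i)^* * b j.

Lemma eq_sesq A a a' b b' : a =1 a' -> b =1 b' -> sesq A a b = sesq A a' b'.
Proof.
by move=> eq_a eq_b; apply: eq_bigr => i _; apply: eq_bigr => j _; rewrite eq_a eq_b.
Qed.

Lemma sesqD A A' a b :
  sesq (fun i j => A i j + A' i j) a b = sesq A a b + sesq A' a b.
Proof.
rewrite -big_split; apply: eq_bigr => i _.
by rewrite -big_split; apply: eq_bigr => j _; rewrite !mulrDl.
Qed.

Lemma sesqB A A' a b :
  sesq (fun i j => A i j - A' i j) a b = sesq A a b - sesq A' a b.
Proof.
rewrite -sumrB; apply: eq_bigr => i _.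
by rewrite -sumrB; apply: eq_bigr => j _; rewrite !mulrBl.
Qed.

Lemma sesqZ c A a b : sesq (fun i j => c * A i j) a b = c * sesq A a b.
Proof.
rewrite mulr_sumr; apply: eq_bigr => i _.
by rewrite mulr_sumr; apply: eq_bigr => j _; rewrite !mulrA.
Qed.

Lemma sesq_hermitian A a : (forall i j, A i j = (A j i)^*) ->
  (sesq A a a)^* = sesq A a a.
Proof.
move=> A_herm; rewrite rmorph_sum; under eq_bigr do rewrite rmorph_sum.
rewrite exchange_big; apply: eq_bigr => j _; apply: eq_bigr => i _ /=.
by rewrite !rmorphM /= conjCK -A_herm mulrAC.
Qed.

Lemma sesq_unit p q a b :
  sesq (fun i j => ((i == p) && (j == q))%:R) a b = (a p)^* * b q.
Proof.
rewrite /sesq (bigD1 p) //= [X in _ + X]big1 ?addr0 => [|i /negbTE ip]; last first.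
  by rewrite big1 // => j _; rewrite ip !mul0r.
rewrite (bigD1 q) //= [X in _ + X]big1 ?addr0 => [|j /negbTE jq]; last first.
  by rewrite jq andbF !mul0r.
by rewrite !eqxx mul1r.
Qed.

Lemma sesq_delta A p q : sesq A (fun i => (i == p)%:R) (fun j => (j == q)%:R) = A p q.
Proof.
rewrite /sesq (bigD1 p) //= [X in _ + X]big1 ?addr0 => [|i /negbTE ip]; last first.
  by rewrite big1 // => j _; rewrite ip rmorph0 mulr0 mul0r.
rewrite (bigD1 q) //= [X in _ + X]big1 ?addr0 => [|j /negbTE jq]; last first.
  by rewrite jq mulr0.
by rewrite !eqxx rmorph1 !mulr1.
Qed.

Lemma sesq_id a : sesq (fun i j => (i == j)%:R) a a = \sum_i `|a i| ^+ 2.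
Proof.
apply: eq_bigr => i _; rewrite (bigD1 i) //= [X in _ + X]big1 ?addr0 => [|j /negbTE ji].
  by rewrite eqxx mul1r normCK mulrC.
by rewrite eq_sym ji !mul0r.
Qed.

Lemma sesq_norm_le A a e : (forall i j, `|A i j| <= e) ->
  `|sesq A a a| <= e * #|I|%:R * \sum_i `|a i| ^+ 2.
Proof.
move=> A_le; set x := fun i => `|a i|.
have am_gm i j : `|A i j * (a i)^* * a j| <= e * ((x i ^+ 2 + x j ^+ 2) / 2).
  rewrite !normrM norm_conjC -mulrA; apply: ler_pM; rewrite ?mulr_ge0 //.
  exact: real_leif_mean_square (normr_real _) (normr_real _).
apply: le_trans (ler_norm_sum _ _ _) _.
apply: le_trans (ler_sum _ (fun i _ =>
  le_trans (ler_norm_sum _ _ _) (ler_sum _ (fun j _ => am_gm i j)))) _.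
under eq_bigr do rewrite -mulr_sumr -mulr_suml big_split /= sumr_const.
rewrite -mulr_sumr -mulr_suml big_split /= sumr_const sumrMnl -mulr2n.
by rewrite -[_ *+ 2]mulr_natr mulfK ?pnatr_eq0 // -mulrA mulr_natl mulrnAr.
Qed.

Lemma sesq_polarization A (S : (I -> C) -> Prop) :
  (forall a b c, S a -> S b -> S (fun i => a i + c * b i)) ->
  (forall a, S a -> sesq A a a = 0) -> forall a b, S a -> S b -> sesq A a b = 0.
Proof.
move=> S_comb S0 a b Sa Sb.
have expand c : sesq A (fun i => a i + c * b i) (fun i => a i + c * b i) =
    sesq A a a + c * sesq A a b + c^* * sesq A b a + c^* * c * sesq A b b.
  rewrite /sesq !mulr_sumr -!big_split; apply: eq_bigr => i _.
  rewrite !mulr_sumr -!big_split; apply: eq_bigr => j _ /=.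
  by rewrite rmorphD rmorphM; ring.
have cross c : c * sesq A a b + c^* * sesq A b a = 0.
  move: (expand c); rewrite (S0 _ (S_comb _ _ c Sa Sb)) (S0 _ Sa) (S0 _ Sb).
  by rewrite mulr0 addr0 add0r => /esym.
have := cross 'i; rewrite conjCi mulNr -mulrBr => /eqP.
rewrite mulf_eq0 (negbTE (neq0Ci C)) subr_eq0 => /eqP sym.
have := cross 1; rewrite rmorph1 !mul1r -sym => /eqP.
by rewrite -mulr2n mulrn_eq0 => /eqP.
Qed.
End Sesquilinear.

Local Open Scope complex_scope.

Section ProductTensors.
Variables (R : realType) (m : nat) (n : 'I_m -> nat).
Local Notation mindex := (mindex n).
Local Notation tensor := (@tensor R m n).
Local Notation vecs := (@vecs R m n).
Local Notation cone := (@Pcone R m n).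
Implicit Types (H D : tensor) (x u v : vecs) (p q : mindex).

Definition prodv x (i : mindex) : R[i] := \prod_k x k (i k).

Lemma pairingE H x : pairing H x = sesq H (prodv x) (prodv x).
Proof. by apply: eq_bigr => i _; apply: eq_bigr => j _; rewrite /prodv rmorph_prod. Qed.

Lemma pairing_tscale t H x : pairing (tscale t H) x = t%:C * pairing H x.
Proof. by rewrite !pairingE sesqZ. Qed.

Lemma herm_space_lincomb rF H H' a b : herm_space rF H -> herm_space rF H' ->
  herm_space rF (tadd (tscale a H) (tscale b H')).
Proof.
move=> [H_herm H_real] [H'_herm H'_real].
split=> [i j | rF_real i j]; rewrite /tadd /tscale.
  by rewrite rmorphD !rmorphM /= oppr0 -H_herm -H'_herm.
by rewrite /is_realc rmorphD !rmorphM /= oppr0 H_real // H'_real.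
Qed.

Lemma Pcone_convex rF : convex_cone rF (cone rF).
Proof.
split=> [H [] // | H H' a b [H_herm H_nneg] [H'_herm H'_nneg] a_ge0 b_ge0].
split=> [|x x_adm]; first exact: herm_space_lincomb.
rewrite pairingE sesqD !sesqZ -!pairingE.
by rewrite addr_ge0 // mulr_ge0 ?ler0c ?H_nneg ?H'_nneg.
Qed.

Lemma pairing_continuous H x (d : R) : 0 < d -> exists2 e : R, 0 < e &
  forall H', near_t H' H e -> `|pairing H' x - pairing H x| < d%:C.
Proof.
move=> d_gt0; pose M : R[i] := #|{: mindex}|%:R * \sum_i `|prodv x i| ^+ 2.
have M_ge0 : 0 <= M.
  by rewrite mulr_ge0 ?ler0n ?sumr_ge0 // => i _; rewrite exprn_ge0.
have M_real : (complex.Re M)%:C = M := @RRe_real R M (ger0_real M_ge0).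
have ReM_ge0 : 0 <= complex.Re M by move: M_ge0; rewrite lecE => /andP[].
exists (d / (complex.Re M + 1)) => [|H' H'_near]; first by rewrite divr_gt0 ?ltr_wpDl.
rewrite !pairingE -sesqB.
apply: le_lt_trans (sesq_norm_le _ (fun i j => ltW (H'_near i j))) _.
rewrite -mulrA -/M -M_real -rmorphM ltcR mulrAC ltr_pdivrMr ?ltr_wpDl //.
by rewrite ltr_pM2l // ltrDl.
Qed.

Lemma Pcone_closed rF : closed_in rF (cone rF).
Proof.
move=> H H_herm H_notin.
have [x x_adm x_neg] : exists2 x, admissible rF x & ~ 0 <= pairing H x.
  apply: NNPP => no_x; apply: H_notin; split=> // x x_adm.
  by apply: NNPP => x_neg; apply: no_x; exists x.
have [d d_gt0 d_far] := nneg_compl_open x_neg.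
have d_real : (complex.Re d)%:C = d := @RRe_real R d (gtr0_real d_gt0).
have [e e_gt0 e_near] : exists2 e : R, 0 < e &
    forall H', near_t H' H e -> `|pairing H' x - pairing H x| < d.
  by rewrite -d_real; apply: pairing_continuous; move: d_gt0; rewrite ltcE => /andP[].
exists e => // H' _ H'_near [_ H'_nneg].
exact: d_far (e_near _ H'_near) (H'_nneg x x_adm).
Qed.

Definition tensor1 : tensor := fun i j => (i == j)%:R.

Lemma herm_space_tensor1 rF : herm_space rF tensor1.
Proof. by split=> [i j | _ i j]; rewrite /is_realc /tensor1 conjc_nat // eq_sym. Qed.

Lemma Pcone_solid rF : solid rF (cone rF).
Proof.
pose N : R := #|{: mindex}|%:R; pose e := (N + 1)^-1.
have e_gt0 : 0 < e by rewrite invr_gt0 ltr_wpDl.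
have eN_le1 : e * N <= 1 by rewrite mulrC ler_pdivrMr ?ltr_wpDl // mul1r lerDl.
have tensor1_interior H : herm_space rF H -> near_t H tensor1 e -> cone rF H.
  move=> H_herm H_near; split=> // x _; rewrite pairingE.
  apply: (real_ge0_dist (s := \sum_i `|prodv x i| ^+ 2)).
    by rewrite CrealE; apply/eqP/sesq_hermitian; case: H_herm.
  rewrite -{1}sesq_id -sesqB.
  apply: le_trans (sesq_norm_le _ (fun i j => ltW (H_near i j))) _.
  apply: ler_piMl; first by apply: sumr_ge0 => i _; rewrite exprn_ge0.
  rewrite -(rmorph_nat (real_complex R)) -rmorphM.
  by rewrite -lecR in eN_le1.
exists tensor1; split; last by exists e.
apply: tensor1_interior; first exact: herm_space_tensor1.
by move=> i j; rewrite subrr normr0 ltcE /= eqxx e_gt0.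
Qed.

Lemma eq_prodv u v : (forall k j, u k j = v k j) -> prodv u =1 prodv v.
Proof. by move=> uv i; apply: eq_bigr => k _; rewrite uv. Qed.

Definition setv (k : 'I_m) u v : vecs := fun l => if l == k then u l else v l.

Lemma prodv_setv k u v i :
  prodv (setv k u v) i = u k (i k) * \prod_(l | l != k) v l (i l).
Proof.
rewrite /prodv (bigD1 k) //= /setv eqxx; congr (_ * _).
by apply: eq_bigr => l /negbTE ->.
Qed.

Lemma sesq_setv D k a b u v :
  sesq D (prodv (setv k a u)) (prodv (setv k b v)) =
  sesq (fun i j => D i j * (\prod_(l | l != k) u l (i l))^* * \prod_(l | l != k) v l (j l))
    (fun i => a k (i k)) (fun j => b k (j k)).
Proof.
apply: eq_bigr => i _; apply: eq_bigr => j _.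
by rewrite !prodv_setv rmorphM; ring.
Qed.

Lemma sesq_prodv_eq0 D : (forall x, sesq D (prodv x) (prodv x) = 0) ->
  forall u v, sesq D (prodv u) (prodv v) = 0.
Proof.
move=> D0.
(* Induction on s: u and v may differ only in the modes below s; the step freezes every
   mode but s and polarizes in mode s. *)
suff agree s : (s <= m)%N -> forall u v,
    (forall k : 'I_m, (s <= k)%N -> forall j, u k j = v k j) ->
    sesq D (prodv u) (prodv v) = 0.
  by move=> u v; apply: (agree m) => // k; rewrite leqNgt ltn_ord.
elim: s => [_ u v uv | s IH s_lt u v uv].
  by rewrite (eq_sesq _ (frefl _) (eq_prodv (fun k j => esym (uv k isT j)))).
pose k := Ordinal s_lt.
have -> : sesq D (prodv u) (prodv v) = sesq D (prodv (setv k u u)) (prodv (setv k v v)).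
  by apply: eq_sesq; apply: eq_prodv => l j; rewrite /setv; case: (l == k).
rewrite sesq_setv.
apply: (sesq_polarization
  (S := fun a : mindex -> R[i] => exists w : vecs, a = fun i => w k (i k))).
- by move=> _ _ c [w ->] [w' ->]; exists (fun l j => w l j + c * w' l j).
- move=> _ [w ->]; rewrite -sesq_setv; apply: IH (ltnW s_lt) _ _ _ => l s_le j.
  rewrite /setv; case: eqP => // /eqP l_neq_k; apply: uv.
  rewrite ltn_neqAle s_le andbT; apply: contraNneq l_neq_k => s_eq.
  by apply/eqP/val_inj; rewrite /= s_eq.
- by exists u.
- by exists v.
Qed.

Definition basis_vecs p : vecs := fun k l => (l == p k)%:R.

Lemma prodv_basis p i : prodv (basis_vecs p) i = (i == p)%:R.
Proof.
have [-> | i_neq_p] := eqVneq i p.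
  by apply: big1 => k _; rewrite /basis_vecs eqxx.
have [k ik] : exists k, i k != p k.
  apply/existsP; move: i_neq_p; apply: contraR => /existsPn ip.
  by apply/eqP/ffunP => k; apply/eqP/negbNE/ip.
by rewrite /prodv (bigD1 k) //= /basis_vecs (negbTE ik) mul0r.
Qed.

Lemma Pcone_pointed : pointed (cone false).
Proof.
move=> [D [D_neq0 D_line]]; apply: D_neq0.
have D0 x : sesq D (prodv x) (prodv x) = 0.
  have x_adm : admissible false x by [].
  have [_ /(_ x x_adm)] := D_line 1; have [_ /(_ x x_adm)] := D_line (-1).
  rewrite !pairing_tscale !pairingE rmorphN1 rmorph1 mulN1r mul1r oppr_ge0.
  by move=> le0 ge0; apply/eqP; rewrite eq_le le0 ge0.
apply: functional_extensionality => p; apply: functional_extensionality => q.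
rewrite -(sesq_delta D p q) -(eq_sesq D (prodv_basis p) (prodv_basis q)).
exact: sesq_prodv_eq0.
Qed.

Definition swap_mode (k : 'I_m) p q : mindex :=
  finfun (fun l => if l == k then q l else p l).

Lemma prodv_swap x k p q :
  prodv x (swap_mode k p q) * prodv x (swap_mode k q p) = prodv x p * prodv x q.
Proof.
rewrite /prodv -!big_split; apply: eq_bigr => l _ /=.
by rewrite !ffunE; case: (l == k); rewrite // mulrC.
Qed.

Definition swap_tensor k p q : tensor := fun i j =>
  ((i == p) && (j == q))%:R + ((i == q) && (j == p))%:R
  - ((i == swap_mode k p q) && (j == swap_mode k q p))%:R
  - ((i == swap_mode k q p) && (j == swap_mode k p q))%:R.

Lemma herm_space_real_sym H t : (forall i j, H j i = H i j) ->
  (forall i j, is_realc (H i j)) -> herm_space true (tscale t H).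
Proof.
move=> H_sym H_real; split=> [i j | _ i j]; rewrite /tscale /is_realc rmorphM /= oppr0.
  by rewrite H_real H_sym.
by rewrite H_real.
Qed.

(* [^*%R] is [Num.conj], the conjugation used by [sesq]; it agrees with the [conjc] of the
   definitions only up to conversion, so rewriting needs this form. *)
Lemma prodv_conj_real x : admissible true x -> forall i, (prodv x i)^*%R = prodv x i.
Proof. by move=> x_real i; rewrite rmorph_prod; apply: eq_bigr => k _; apply: x_real. Qed.

Lemma swap_tensor_line k p q t : cone true (tscale t (swap_tensor k p q)).
Proof.
split.
  apply: herm_space_real_sym => i j; rewrite /swap_tensor.
    by rewrite ![(j == _) && _]andbC; ring.
  by rewrite /is_realc !rmorphB rmorphD !rmorph_nat.
move=> x x_real; rewrite pairing_tscale pairingE !sesqB sesqD !sesq_unit.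
rewrite !(prodv_conj_real x_real) (mulrC (prodv x q)) (mulrC (prodv x (swap_mode k q p))).
by rewrite prodv_swap addrK subrr mulr0.
Qed.

Lemma swap_tensor_neq0 k l p q : l != k -> p k != q k -> p l != q l ->
  swap_tensor k p q <> @tzero R m n.
Proof.
move=> l_neq_k pq_k pq_l /(congr1 (fun H : tensor => H p q)).
have p_neq_q : p != q by apply: contraNneq pq_k => ->.
have p_neq_swap : p != swap_mode k p q.
  by apply: contraNneq pq_k => /(congr1 (fun i : mindex => i k)); rewrite ffunE eqxx => ->.
have p_neq_swap' : p != swap_mode k q p.
  apply: contraNneq pq_l => /(congr1 (fun i : mindex => i l)).
  by rewrite ffunE (negbTE l_neq_k) => ->.
rewrite /swap_tensor /tzero !eqxx (negbTE p_neq_q).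
rewrite (negbTE p_neq_swap) (negbTE p_neq_swap') /=.
by rewrite !subr0 addr0 => /eqP; rewrite oner_eq0.
Qed.

Lemma Pcone_real_not_pointed : (1 < m)%N -> (forall k, (1 < n k)%N) ->
  ~ pointed (cone true).
Proof.
move=> m_gt1 n_gt1.
pose k0 : 'I_m := Ordinal (ltnW m_gt1); pose k1 : 'I_m := Ordinal m_gt1.
pose p : mindex := finfun (fun k => Ordinal (ltnW (n_gt1 k))).
pose q : mindex := finfun (fun k => Ordinal (n_gt1 k)).
have pq k : p k != q k by rewrite !ffunE.
apply; exists (swap_tensor k0 p q); split; first exact: (@swap_tensor_neq0 _ k1).
exact: swap_tensor_line.
Qed.

End ProductTensors.

Theorem proposition5p4 (R : realType) (m : nat) (n : 'I_m -> nat) :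
  (1 < m)%N -> (forall k, (1 < n k)%N) ->
  proper_cone false (@Pcone R m n false) /\
  (closed_convex_cone true (@Pcone R m n true) /\
   solid true (@Pcone R m n true) /\
   ~ pointed (@Pcone R m n true)).
Proof.
move=> m_gt1 n_gt1.
have closed_convex rF : closed_convex_cone rF (@Pcone R m n rF).
  by split; [exact: Pcone_convex | exact: Pcone_closed].
split.
  by split; [exact: closed_convex | split; [exact: Pcone_solid | exact: Pcone_pointed]].
split; first exact: closed_convex.
by split; [exact: Pcone_solid | exact: Pcone_real_not_pointed].
Qed.
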